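(* Fix a parameter space $W$, a data space $X$, an update rule $g: W\times X\to W$, a metric $d$ on $W$ and initial parameters $\mathbf{w}_0\in W$. Then the relation on datasets $D\subseteq X$ given by ''$D$ and $D'$ are forgeable with $\epsilon=0$'' is an equivalence relation.
   Context: A valid $(g,d,\epsilon)$ log is a sequence $\{(\mathbf{w}_i,\mathbf{x}_i)\}_{i\in J}$ ($J$ a countable index set, consecutive indices) such that $d(\mathbf{w}_{i+1}, g(\mathbf{w}_i,\mathbf{x}_i))\le \epsilon$ for all $i\in J$. For a dataset $D$, $H_{D,g,d,\epsilon}$ is the set of all valid $(g,d,\epsilon)$ logs starting from $\mathbf{w}_0$ whose data points all lie in $D$. A forging map from $D$ to $D'$ (with $\epsilon$) is a map $B: H_{D,g,d,0}\to H_{D',g,d,\epsilon}$ with $B(\{(\mathbf{w}_i,\mathbf{x}_i)\}_{i\in J})=\{(\mathbf{w}_i,\tilde{\mathbf{x}}_i)\}_{i\in J}$, $\tilde{\mathbf{x}}_i\in D'$, the output being a valid $(g,d,\epsilon)$ log. $D$ and $D'$ are forgeable with $\epsilon$ if there is a forging map from $D$ to $D'$ and one from $D'$ to $D$, both with $\epsilon$. *)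

From Stdlib Require Import Reals List Relation_Definitions.
Open Scope R_scope.

Set Implicit Arguments.

Definition is_metric (W : Type) (d : W -> W -> R) : Prop :=
  (forall a b, 0 <= d a b) /\
  (forall a b, d a b = 0 <-> a = b) /\
  (forall a b, d a b = d b a) /\
  (forall a b c, d a c <= d a b + d b c).

(* A log {(w_i, x_i)}_{i in J}: J is a countable set of consecutive indices
   starting at 0, i.e. either {0,...,n-1} (finite log) or all of nat. *)
Inductive log (W X : Type) : Type :=
| FinLog : list (W * X) -> log W X
| InfLog : (nat -> W * X) -> log W X.

Definition entry (W X : Type) (l : log W X) (i : nat) : option (W * X) :=
  match l with
  | FinLog s => nth_error s i
  | InfLog f => Some (f i)
  end.

Definition valid_log (W X : Type) (g : W -> X -> W) (d : W -> W -> R)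
  (eps : R) (l : log W X) : Prop :=
  forall i p q, entry l i = Some p -> entry l (S i) = Some q ->
    d (fst q) (g (fst p) (snd p)) <= eps.

Definition in_H (W X : Type) (g : W -> X -> W) (d : W -> W -> R) (w0 : W)
  (eps : R) (D : X -> Prop) (l : log W X) : Prop :=
  valid_log g d eps l /\
  (forall p, entry l 0 = Some p -> fst p = w0) /\
  (forall i p, entry l i = Some p -> D (snd p)).

(* B l has the same index set J and the same parameters w_i as l *)
Definition same_weights (W X : Type) (l l' : log W X) : Prop :=
  forall i, option_map fst (entry l i) = option_map fst (entry l' i).

Definition forging_map (W X : Type) (g : W -> X -> W) (d : W -> W -> R)
  (w0 : W) (eps : R) (D D' : X -> Prop) (B : log W X -> log W X) : Prop :=
  forall l, in_H g d w0 0 D l ->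
    in_H g d w0 eps D' (B l) /\ same_weights l (B l).

Definition forgeable (W X : Type) (g : W -> X -> W) (d : W -> W -> R)
  (w0 : W) (eps : R) (D D' : X -> Prop) : Prop :=
  (exists B, forging_map g d w0 eps D D' B) /\
  (exists B, forging_map g d w0 eps D' D B).

(* Forging maps compose and the identity is a forging map, because both
   preserve the sequence of parameters; with [eps = 0] the output of a forging
   map is again a log that a forging map accepts, so composition is defined. *)

From Stdlib Require Import Reals Relation_Definitions.
Open Scope R_scope.

Set Implicit Arguments.

Lemma same_weights_refl (W X : Type) (l : log W X) : same_weights l l.
Proof. intro i; reflexivity. Qed.

Lemma same_weights_trans (W X : Type) (l1 l2 l3 : log W X) :
  same_weights l1 l2 -> same_weights l2 l3 -> same_weights l1 l3.
Proof. intros H12 H23 i; rewrite H12; apply H23. Qed.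

Lemma valid_log_mono (W X : Type) (g : W -> X -> W) (d : W -> W -> R)
  (eps eps' : R) (l : log W X) :
  eps <= eps' -> valid_log g d eps l -> valid_log g d eps' l.
Proof.
  intros Hle Hl i p q Hp Hq.
  apply Rle_trans with eps; [exact (Hl i p q Hp Hq) | exact Hle].
Qed.

Lemma in_H_mono (W X : Type) (g : W -> X -> W) (d : W -> W -> R) (w0 : W)
  (eps eps' : R) (D : X -> Prop) (l : log W X) :
  eps <= eps' -> in_H g d w0 eps D l -> in_H g d w0 eps' D l.
Proof.
  intros Hle [Hvalid Hrest]; split; [exact (valid_log_mono Hle Hvalid) | exact Hrest].
Qed.

Lemma forging_map_id (W X : Type) (g : W -> X -> W) (d : W -> W -> R)
  (w0 : W) (eps : R) (D : X -> Prop) :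
  0 <= eps -> forging_map g d w0 eps D D (fun l => l).
Proof.
  intros Heps l Hl; split.
  - exact (in_H_mono Heps Hl).
  - apply same_weights_refl.
Qed.

Lemma forging_map_comp (W X : Type) (g : W -> X -> W) (d : W -> W -> R)
  (w0 : W) (eps : R) (D1 D2 D3 : X -> Prop) (B12 B23 : log W X -> log W X) :
  forging_map g d w0 0 D1 D2 B12 -> forging_map g d w0 eps D2 D3 B23 ->
  forging_map g d w0 eps D1 D3 (fun l => B23 (B12 l)).
Proof.
  intros H12 H23 l Hl.
  destruct (H12 l Hl) as [Hl2 Hw12].
  destruct (H23 _ Hl2) as [Hl3 Hw23].
  split; [exact Hl3 | exact (same_weights_trans Hw12 Hw23)].
Qed.

Lemma forgeable_refl (W X : Type) (g : W -> X -> W) (d : W -> W -> R)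
  (w0 : W) (eps : R) (D : X -> Prop) :
  0 <= eps -> forgeable g d w0 eps D D.
Proof.
  intro Heps; split; exists (fun l => l); apply forging_map_id, Heps.
Qed.

Lemma forgeable_sym (W X : Type) (g : W -> X -> W) (d : W -> W -> R)
  (w0 : W) (eps : R) (D D' : X -> Prop) :
  forgeable g d w0 eps D D' -> forgeable g d w0 eps D' D.
Proof. intros [HDD' HD'D]; split; assumption. Qed.

Lemma forgeable0_trans (W X : Type) (g : W -> X -> W) (d : W -> W -> R)
  (w0 : W) (D1 D2 D3 : X -> Prop) :
  forgeable g d w0 0 D1 D2 -> forgeable g d w0 0 D2 D3 ->
  forgeable g d w0 0 D1 D3.
Proof.
  intros [[B12 H12] [B21 H21]] [[B23 H23] [B32 H32]]; split.
  - exists (fun l => B23 (B12 l)); exact (forging_map_comp H12 H23).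
  - exists (fun l => B21 (B32 l)); exact (forging_map_comp H32 H21).
Qed.

Theorem lemma2 (W X : Type) (g : W -> X -> W) (d : W -> W -> R) (w0 : W)
  (hd : is_metric d) :
  equivalence (X -> Prop) (forgeable g d w0 0).
Proof.
  split.
  - intro D; apply forgeable_refl, Rle_refl.
  - intros D1 D2 D3; apply forgeable0_trans.
  - intros D D'; apply forgeable_sym.
Qed.
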